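(* Let $T_{\mathfrak{sl}_3} \in \mathfrak{sl}_3^* \otimes \mathfrak{sl}_3^* \otimes \mathfrak{sl}_3$ be the structure tensor of the complex Lie algebra $\mathfrak{sl}_3$. Then its tensor rank satisfies $\mathbf{R}(T_{\mathfrak{sl}_3}) \leq 20$.
   Context: $\mathfrak{sl}_n$ denotes the Lie algebra of traceless $n\times n$ complex matrices with bracket $[x,y]=xy-yx$. Its structure tensor $T_{\mathfrak{sl}_n}\in \mathfrak{sl}_n^*\otimes\mathfrak{sl}_n^*\otimes\mathfrak{sl}_n$ is the tensor corresponding to the bilinear map $(x,y)\mapsto [x,y]$; in a basis $\{a_i\}$ with dual basis $\{\alpha^i\}$ and $[a_i,a_j]=\sum_k A_{ij}^k a_k$, it is $\sum_{i,j,k} A_{ij}^k\,\alpha^i\otimes\alpha^j\otimes a_k$. For a tensor $T\in A\otimes B\otimes C$ over $\mathbb{C}$, the rank $\mathbf{R}(T)$ is the minimal $r$ such that $T=\sum_{i=1}^r a_i\otimes b_i\otimes c_i$ with $a_i\in A$, $b_i\in B$, $c_i\in C$. *)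

From HB Require Import structures.
From mathcomp Require Import all_boot all_order all_algebra.
From mathcomp Require Import reals.
From mathcomp.real_closed Require Import complex.
Set Implicit Arguments. Unset Strict Implicit. Unset Printing Implicit Defensive.
Import GRing.Theory Num.Theory.
Local Open Scope ring_scope.

Definition sl (F : fieldType) (n : nat) : pred 'M[F]_n := fun x => \tr x == 0.
Arguments sl : clear implicits.

Definition lie_bracket (F : fieldType) (n : nat) (x y : 'M[F]_n) : 'M[F]_n :=
  x *m y - y *m x.

(* The structure tensor T_{sl_n} in sl_n^* (x) sl_n^* (x) sl_n has rank <= r:
   there are a_1..a_s, b_1..b_s in sl_n^* and c_1..c_s in sl_n, s <= r, with
   T = sum_i a_i (x) b_i (x) c_i, i.e. (identifying sl_n^* (x) sl_n^* (x) sl_n with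
   bilinear maps sl_n x sl_n -> sl_n) [x,y] = sum_i a_i(x) b_i(y) c_i for all
   x, y in sl_n.  Linear functionals on sl_n are represented as (restrictions of)
   linear functionals on 'M_n; every functional on sl_n arises this way. *)
Definition sl_struct_tensor_rank_le (F : fieldType) (n r : nat) : Prop :=
  exists s : nat, (s <= r)%N /\
  exists (a b : 'I_s -> {linear 'M[F]_n -> F^o}) (c : 'I_s -> 'M[F]_n),
    (forall i, c i \in sl F n) /\
    (forall x y : 'M[F]_n, x \in sl F n -> y \in sl F n ->
       lie_bracket x y = \sum_(i < s) (a i x * b i y) *: c i).

(* T_{sl_3} has an explicit decomposition into 20 rank-one terms with integer coefficients.
   After eliminating x22 and y22 by the trace conditions, the identity
   [x, y] = sum_i a_i(x) b_i(y) c_i is, entry by entry, a polynomial identity with integer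
   coefficients, so it holds over every field. *)

From HB Require Import structures.
From mathcomp Require Import all_boot all_order all_algebra.
From mathcomp Require Import reals.
From mathcomp.real_closed Require Import complex.
From mathcomp Require Import ring.

Set Implicit Arguments. Unset Strict Implicit. Unset Printing Implicit Defensive.
Import GRing.Theory.
Local Open Scope ring_scope.

Lemma sl_struct_tensor_rank_le_seq (F : fieldType) (n : nat) (T : Type) (s : seq T)
    (a b : T -> {linear 'M[F]_n -> F^o}) (c : T -> 'M[F]_n) :
  (forall t, c t \in sl F n) ->
  (forall x y, x \in sl F n -> y \in sl F n ->
     lie_bracket x y = \sum_(t <- s) (a t x * b t y) *: c t) ->
  sl_struct_tensor_rank_le F n (size s).
Proof.
move=> c_sl bracketE; exists (size s); split=> //.
pose s_ := tnth (in_tuple s).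
exists (a \o s_), (b \o s_), (c \o s_); split=> [i|x y x_sl y_sl]; first exact: c_sl.
by rewrite bracketE // big_tnth.
Qed.

Definition i0 : 'I_3 := @Ordinal 3 0 isT.
Definition i1 : 'I_3 := @Ordinal 3 1 isT.
Definition i2 : 'I_3 := @Ordinal 3 2 isT.

Lemma ord3P (P : 'I_3 -> Prop) : P i0 -> P i1 -> P i2 -> forall i, P i.
Proof.
move=> P0 P1 P2 [[|[|[|k]]] lt_k3] //.
- by rewrite (_ : Ordinal _ = i0) //; apply: val_inj.
- by rewrite (_ : Ordinal _ = i1) //; apply: val_inj.
- by rewrite (_ : Ordinal _ = i2) //; apply: val_inj.
Qed.

Lemma big_ord3 (V : nmodType) (f : 'I_3 -> V) : \sum_(k < 3) f k = f i0 + f i1 + f i2.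
Proof. by rewrite !big_ord_recl big_ord0 addr0 addrA; congr (f _ + f _ + f _); apply: val_inj. Qed.

Lemma sl3_entry22 (F : fieldType) (x : 'M[F]_3) : x \in sl F 3 -> x i2 i2 = - x i0 i0 - x i1 i1.
Proof. by rewrite unfold_in /sl /mxtrace big_ord3 => /eqP tr_x; rewrite -[RHS]add0r -tr_x; ring. Qed.

(* In the basis E01, E02, E10, E12, E20, E21, E00 - E11, E11 - E22 of sl_3, [sl3_vec v] is the
   element with coordinates [v]; the dual basis consists of the restrictions to sl_3 of
   x01, x02, x10, x12, x20, x21, x00, -x22, so [sl3_form v] is the functional with coordinates [v]. *)
Section SL3Coordinates.
Variable F : fieldType.

Definition sl3_form (v : seq F) (x : 'M[F]_3) : F^o :=
  v`_0 * x i0 i1 + v`_1 * x i0 i2 + v`_2 * x i1 i0 + v`_3 * x i1 i2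
  + v`_4 * x i2 i0 + v`_5 * x i2 i1 + v`_6 * x i0 i0 - v`_7 * x i2 i2.

Definition sl3_vec (v : seq F) : 'M[F]_3 :=
  \matrix_(i, j) nth 0 (nth [::] [:: [:: v`_6; v`_0;        v`_1];
                                     [:: v`_2; v`_7 - v`_6; v`_3];
                                     [:: v`_4; v`_5;        - v`_7]] i) j.

Lemma sl3_form_is_linear v : linear (sl3_form v).
Proof. by move=> a x y; rewrite /sl3_form !mxE /GRing.scale /=; ring. Qed.

Lemma sl3_vec_sl v : sl3_vec v \in sl F 3.
Proof. by rewrite unfold_in /sl /mxtrace big_ord3 !mxE /=; apply/eqP; ring. Qed.

End SL3Coordinates.

HB.instance Definition _ (F : fieldType) (v : seq F) :=
  GRing.isLinear.Build F 'M[F]_3 F^o *:%R (sl3_form v) (sl3_form_is_linear v).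

Definition sl3_rank20_decomposition (F : fieldType) : seq (seq F * seq F * seq F) :=
  [:: ([::  0;  0;  1;  0;  0;  0;  0;  0], [::  1; -1; -2;  1;  0;  0; -2;  1], [::  3;  0; -2;  0;  1; -1;  1;  0]);
      ([::  1;  0; -1;  0;  0;  0;  0;  0], [::  2; -1; -2;  1;  0;  0; -2;  1], [::  3;  0; -1;  0;  1; -1;  1;  0]);
      ([::  1;  0;  0;  0;  0;  0;  0;  0], [::  2; -1; -3;  1;  0;  0; -2;  1], [:: -2;  0;  1;  0; -1;  1; -1;  0]);
      ([:: -2; -1;  3; -1;  0;  0;  2; -1], [::  1;  0;  0;  0;  0;  0;  0;  0], [::  1;  0;  0;  0;  0;  0;  0;  0]);
      ([:: -1;  1;  2; -1;  0;  0;  2; -1], [::  0;  0;  1;  0;  0;  0;  0;  0], [::  0;  0; -1;  0;  0;  0;  0;  0]);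
      ([:: -1;  1; -1; -1;  1;  1;  0;  0], [::  0;  0;  1;  0; -1;  0;  0;  0], [::  0;  0;  1; -1;  0;  0;  0;  0]);
      ([::  0;  1;  0;  1;  0;  0;  0;  0], [::  1;  0;  0;  0;  0;  1;  0;  0], [::  1; -1;  0;  0;  0;  0;  0;  0]);
      ([::  0;  0;  1;  0; -1;  0;  0;  0], [::  1; -1;  1;  1; -1; -1;  0;  0], [::  0;  0;  0;  0;  1; -1;  0;  0]);
      ([::  1;  0;  0;  0;  0; -1;  0;  0], [::  0;  1;  0; -1;  0;  0;  0;  0], [::  1; -1;  1; -1; -1;  1;  0;  0]);
      ([::  1;  0;  1;  0; -1; -1;  0;  0], [::  0; -1;  1;  1; -1;  0;  0;  0], [::  0;  0;  1; -1; -1;  1;  0;  0]);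
      ([::  0;  0;  0;  0;  0;  1;  0;  0], [::  0;  0;  0; -1;  0;  0;  0;  0], [::  1; -1;  0; -1;  0;  1;  0;  1]);
      ([::  0;  0; -1; -1;  1;  1;  1; -2], [::  0;  0;  1;  0; -1;  0; -1;  2], [::  0;  0;  0;  1;  0;  0;  0;  0]);
      ([::  0;  0;  1;  0; -1;  0; -1;  2], [::  0;  0;  1;  1; -1; -1; -1;  2], [::  0;  0;  0;  0;  0;  1;  0;  0]);
      ([::  0;  0;  1;  0; -1; -1; -1;  2], [::  0;  0;  1;  1; -1;  0; -1;  2], [::  0;  0;  0;  1;  0; -1;  0;  0]);
      ([::  0;  0;  0;  1;  0;  0;  0;  0], [::  0;  0;  0;  0;  0;  1;  0;  0], [:: -1;  1;  0;  0;  0;  0;  0;  1]);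
      ([::  0;  0;  0;  0; -1;  0;  0;  0], [:: -1; -1;  0;  0;  3;  1; -1; -1], [::  0;  0;  0;  0;  1;  0;  0;  0]);
      ([::  1;  2;  0;  0; -2; -1;  1;  1], [::  0;  1;  0;  0;  0;  0;  0;  0], [::  0;  3; -1;  1; -1;  0; -1; -1]);
      ([::  1;  2;  0;  0; -3; -1;  1;  1], [::  0; -1;  0;  0; -1;  0;  0;  0], [::  0;  2; -1;  1; -1;  0; -1; -1]);
      ([::  0;  1;  0;  0;  0;  0;  0;  0], [::  1; -2;  0;  0;  2;  1; -1; -1], [::  0;  1;  0;  0;  0;  0;  0;  0]);
      ([::  1;  1;  0;  0; -3; -1;  1;  1], [::  0;  0;  0;  0;  1;  0;  0;  0], [::  0;  2; -1;  1; -2;  0; -1; -1])].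

Lemma sl3_bracket_rank20_decomposition (F : fieldType) (x y : 'M[F]_3) :
  x \in sl F 3 -> y \in sl F 3 ->
  lie_bracket x y = \sum_(t <- sl3_rank20_decomposition F)
                      (sl3_form t.1.1 x * sl3_form t.1.2 y) *: sl3_vec t.2.
Proof.
move=> /sl3_entry22 x22E /sl3_entry22 y22E.
rewrite /sl3_rank20_decomposition !big_cons big_nil /sl3_form /sl3_vec /=.
apply/matrixP; apply: ord3P; apply: ord3P;
  by rewrite /lie_bracket !mxE !big_ord3 /= x22E y22E; ring.
Qed.

Lemma sl3_struct_tensor_rank_le20 (F : fieldType) : sl_struct_tensor_rank_le F 3 20.
Proof.
apply: (@sl_struct_tensor_rank_le_seq _ _ _ (sl3_rank20_decomposition F)
          (fun t => sl3_form t.1.1) (fun t => sl3_form t.1.2) (fun t => sl3_vec t.2)).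
- by move=> t; apply: sl3_vec_sl.
- exact: sl3_bracket_rank20_decomposition.
Qed.

Theorem theorem2 (R : realType) : sl_struct_tensor_rank_le (R[i]) 3 20.
Proof. exact: sl3_struct_tensor_rank_le20. Qed.
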